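(* For every graph $G$ and every integer $\ell\ge 0$, a set $B\subseteq V(G)$ is an $\ell$-leaky forcing set of $G$ if and only if it is a specified $\ell$-leaky forcing set of $G$. In particular $\operatorname{Z}^s_{(\ell)}(G)=\operatorname{Z}_{(\ell)}(G)$.
   Context: All graphs are finite, simple and undirected. Zero forcing: a blue vertex $u$ with exactly one white neighbor $w$ may force $w$ (color it blue), written $u\to w$. A vertex leak is a vertex not allowed to perform any force; $B$ is an $\ell$-leaky forcing set if for every set of at most $\ell$ vertex leaks, exhaustively applying the forcing rule from initial blue set $B$ colors all of $V(G)$ blue. A specified leak is an ordered pair $v\to u$ indicating that $v$ is prohibited from forcing $u$; $B$ is a specified $\ell$-leaky forcing set if for every set of at most $\ell$ specified leaks, $B$ colors all of $V(G)$ blue without performing prohibited forces. $\operatorname{Z}_{(\ell)}(G)$ and $\operatorname{Z}^s_{(\ell)}(G)$ denote the minimum sizes of an $\ell$-leaky forcing set and a specified $\ell$-leaky forcing set, respectively. *)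

From mathcomp Require Import all_boot.
Set Implicit Arguments. Unset Strict Implicit. Unset Printing Implicit Defensive.

Definition simple_graph (T : finType) (e : rel T) : Prop :=
  symmetric e /\ irreflexive e.

(* One round of applying the zero forcing rule in parallel, where
   [allowed u w] says whether u is permitted to force w. *)
Definition force_step (T : finType) (e : rel T) (allowed : T -> T -> bool)
  (S : {set T}) : {set T} :=
  S :|: [set w | [exists u, [&& u \in S, allowed u w, e u w &
                   [forall x, (e u x && (x != w)) ==> (x \in S)]]]].

(* Final blue set after exhaustively applying the forcing rule
   (#|T| rounds suffice to reach the fixpoint). *)
Definition force_closure (T : finType) (e : rel T) (allowed : T -> T -> bool)
  (B : {set T}) : {set T} :=
  iter #|T| (force_step e allowed) B.

Definition forces_all (T : finType) (e : rel T) (allowed : T -> T -> bool)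
  (B : {set T}) : bool :=
  force_closure e allowed B == [set: T].

Definition leaky_forcing_set (T : finType) (e : rel T) (l : nat) (B : {set T}) : bool :=
  [forall L : {set T}, (#|L| <= l) ==> forces_all e (fun u _ => u \notin L) B].

Definition spec_leaky_forcing_set (T : finType) (e : rel T) (l : nat) (B : {set T}) : bool :=
  [forall P : {set T * T}, (#|P| <= l) ==> forces_all e (fun u w => (u, w) \notin P) B].

(* Minimum sizes.  V(G) itself is always such a set, so #|T| is a valid
   initial value for the minimum. *)
Definition Z_leaky (T : finType) (e : rel T) (l : nat) : nat :=
  \big[minn/#|T|]_(B : {set T} | leaky_forcing_set e l B) #|B|.

Definition Z_spec_leaky (T : finType) (e : rel T) (l : nat) : nat :=
  \big[minn/#|T|]_(B : {set T} | spec_leaky_forcing_set e l B) #|B|.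

From mathcomp Require Import all_boot.
Set Implicit Arguments. Unset Strict Implicit. Unset Printing Implicit Defensive.

(* Write cl_a(B) for the closure of B under the forcing rule restricted by an
   allowance predicate a.  The closure is the least superset of B that is
   closed under one forcing round, because a round is monotone and inflationary.

   - A set P of specified leaks is dominated by the vertex leaks
     L = {v | (v, u) in P}: every force allowed under L is allowed under P,
     and #|L| <= #|P|.  Hence cl_L(B) is contained in cl_P(B).
   - Conversely, let F = cl_L(B).  The forces that the leaks in L actually
     block at F form a set P of pairs (v, u); since a vertex that can force
     has exactly one white neighbour, v determines u, so #|P| <= #|L|.  F is
     closed under forcing restricted by P, hence cl_P(B) is contained in F.

   So B is l-leaky forcing iff it is specified l-leaky forcing, and the two
   minima coincide. *)

Section Iteration.
Variable T : finType.

(* Iterating an inflationary map on subsets of T stabilises after #|T| steps: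
   as long as it has not stabilised, the k-th iterate has at least k elements. *)
Lemma iter_inflationary_closed (f : {set T} -> {set T}) (B : {set T}) :
  (forall S : {set T}, S \subset f S) -> f (iter #|T| f B) \subset iter #|T| f B.
Proof.
move=> infl.
have grow k : f (iter k f B) \subset iter k f B \/ k <= #|iter k f B|.
  elim: k => [|k IH]; first by right.
  have [stable|unstable] := boolP (f (iter k f B) \subset iter k f B).
    left; have fixk : iter k.+1 f B = iter k f B.
      by apply/eqP; rewrite eqEsubset stable infl.
    by rewrite fixk.
  right; case: IH => [stable|le_k]; first by rewrite stable in unstable.
  have proper_k : iter k f B \proper iter k.+1 f B by rewrite properE infl.
  exact: leq_ltn_trans le_k (proper_card proper_k).
case: (grow #|T|) => // full.
have -> : iter #|T| f B = [set: T].
  by apply/eqP; rewrite eqEcard subsetT cardsT full.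
by rewrite subsetT.
Qed.

Lemma iter_monotone_least (f : {set T} -> {set T}) (B S : {set T}) k :
  {homo f : X Y / X \subset Y} -> B \subset S -> f S \subset S ->
  iter k f B \subset S.
Proof.
move=> mono sub_BS closedS; elim: k => [|k IH] //=.
exact: subset_trans (mono _ _ IH) closedS.
Qed.

End Iteration.

Section Forcing.
Variables (T : finType) (e : rel T).

Definition can_force (S : {set T}) (u w : T) : bool :=
  [&& u \in S, e u w & [forall x, (e u x && (x != w)) ==> (x \in S)]].

Lemma in_force_step (a : T -> T -> bool) (S : {set T}) (w : T) :
  (w \in force_step e a S) = (w \in S) || [exists u, a u w && can_force S u w].
Proof.
rewrite /force_step !inE; congr orb; apply: eq_existsb => u.
by rewrite /can_force; case: (u \in S); case: (a u w).
Qed.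

Lemma can_force_unique (S : {set T}) (u w w' : T) :
  can_force S u w -> e u w' -> w' \notin S -> w' = w.
Proof.
case/and3P => _ _ /forallP others e_uw' w'_white.
apply/eqP; apply: contraNT w'_white => ne_w'w.
by apply: (implyP (others w')); rewrite e_uw'.
Qed.

Lemma can_force_mono (S S' : {set T}) (u w : T) :
  S \subset S' -> can_force S u w -> can_force S' u w.
Proof.
move=> sub /and3P [u_in e_uw /forallP others].
rewrite /can_force (subsetP sub _ u_in) e_uw /=.
by apply/forallP => x; apply/implyP => /(implyP (others x)) /(subsetP sub).
Qed.

Lemma force_step_mono (a1 a2 : T -> T -> bool) (S1 S2 : {set T}) :
  (forall u w, a1 u w -> a2 u w) -> S1 \subset S2 ->
  force_step e a1 S1 \subset force_step e a2 S2.
Proof.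
move=> sub_a sub_S; apply/subsetP => w; rewrite !in_force_step.
case/orP => [w_in | /existsP [u /andP [a_uw force_uw]]].
  by rewrite (subsetP sub_S _ w_in).
apply/orP; right; apply/existsP; exists u.
by rewrite sub_a //= (can_force_mono sub_S).
Qed.

Lemma force_step_inflationary (a : T -> T -> bool) (S : {set T}) :
  S \subset force_step e a S.
Proof. exact: subsetUl. Qed.

Lemma force_closure_mono (a1 a2 : T -> T -> bool) (B : {set T}) :
  (forall u w, a1 u w -> a2 u w) ->
  force_closure e a1 B \subset force_closure e a2 B.
Proof.
move=> sub_a; rewrite /force_closure; elim: #|T| => [|k IH] //=.
exact: force_step_mono.
Qed.

Lemma force_closure_ext (a : T -> T -> bool) (B : {set T}) :
  B \subset force_closure e a B.
Proof.
rewrite /force_closure; elim: #|T| => [|k IH] //=.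
exact: subset_trans IH (force_step_inflationary _ _).
Qed.

Lemma force_closure_closed (a : T -> T -> bool) (B : {set T}) :
  force_step e a (force_closure e a B) \subset force_closure e a B.
Proof. exact/iter_inflationary_closed/force_step_inflationary. Qed.

Lemma force_closure_least (a : T -> T -> bool) (B S : {set T}) :
  B \subset S -> force_step e a S \subset S -> force_closure e a B \subset S.
Proof.
move=> sub_BS closedS; apply: iter_monotone_least => // X Y.
exact: force_step_mono.
Qed.

Definition vertex_leak_allowed (L : {set T}) : T -> T -> bool :=
  fun u _ => u \notin L.

Definition pair_leak_allowed (P : {set T * T}) : T -> T -> bool :=
  fun u w => (u, w) \notin P.

Lemma pair_leaks_weaker (P : {set T * T}) (B : {set T}) :
  force_closure e (vertex_leak_allowed [set p.1 | p in P]) B \subset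
  force_closure e (pair_leak_allowed P) B.
Proof.
apply: force_closure_mono => u w; apply: contra => uw_in.
by apply/imsetP; exists (u, w).
Qed.

Definition blocked_forces (L F : {set T}) : {set T * T} :=
  [set p | [&& p.1 \in L, p.2 \notin F & can_force F p.1 p.2]].

(* Each leak blocks at most one force, by [can_force_unique]. *)
Lemma card_blocked_forces (L F : {set T}) : #|blocked_forces L F| <= #|L|.
Proof.
have inj_src : {in blocked_forces L F &, injective (fun p : T * T => p.1)}.
  move=> [u w] [u' w']; rewrite !inE /= => /and3P [_ _ force_uw]
    /and3P [_ w'_white /and3P [_ e_uw' _]] eq_u; subst u'.
  by rewrite (can_force_unique force_uw e_uw' w'_white).
rewrite -(card_in_imset inj_src); apply: subset_leq_card.
by apply/subsetP => u /imsetP [p]; rewrite inE => /and3P [src_in _ _] ->.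
Qed.

Lemma blocked_forces_closed (L F : {set T}) :
  force_step e (vertex_leak_allowed L) F \subset F ->
  force_step e (pair_leak_allowed (blocked_forces L F)) F \subset F.
Proof.
move=> closedF; apply/subsetP => w; rewrite in_force_step.
case/orP => [// | /existsP [u /andP [not_blocked force_uw]]].
apply/negPn/negP => w_white.
have u_not_leak : u \notin L.
  by apply: contra not_blocked => u_in; rewrite inE /= u_in w_white.
apply: (negP w_white); apply: (subsetP closedF); rewrite in_force_step.
by apply/orP; right; apply/existsP; exists u; rewrite /vertex_leak_allowed u_not_leak.
Qed.

Lemma spec_leaky_of_leaky (l : nat) (B : {set T}) :
  leaky_forcing_set e l B -> spec_leaky_forcing_set e l B.
Proof.
move/forallP => leaky; apply/forallP => P; apply/implyP => card_P.
have card_src : #|[set p.1 | p in P]| <= l.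
  exact: leq_trans (leq_imset_card _ _) card_P.
move/implyP/(_ card_src)/eqP: (leaky [set p.1 | p in P]) => full.
by rewrite /forces_all eqEsubset subsetT -full (pair_leaks_weaker P B).
Qed.

(* Tolerating any l specified leaks implies tolerating any l vertex leaks:
   the leaks L can only stop the forces in [blocked_forces L F]. *)
Lemma leaky_of_spec_leaky (l : nat) (B : {set T}) :
  spec_leaky_forcing_set e l B -> leaky_forcing_set e l B.
Proof.
move/forallP => spec; apply/forallP => L; apply/implyP => card_L.
set F := force_closure e (vertex_leak_allowed L) B.
set P := blocked_forces L F.
have card_P : #|P| <= l := leq_trans (card_blocked_forces L F) card_L.
move/implyP/(_ card_P)/eqP: (spec P) => full.
have sub_F : force_closure e (pair_leak_allowed P) B \subset F.
  apply: force_closure_least; first exact: force_closure_ext.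
  exact/blocked_forces_closed/force_closure_closed.
by rewrite /forces_all -/F eqEsubset subsetT -full.
Qed.

End Forcing.

Theorem corollary3p2 (T : finType) (e : rel T) (l : nat) :
  simple_graph e ->
  (forall B : {set T}, leaky_forcing_set e l B <-> spec_leaky_forcing_set e l B) /\
  Z_spec_leaky e l = Z_leaky e l.
Proof.
move=> _.
have same_sets (B : {set T}) :
    leaky_forcing_set e l B <-> spec_leaky_forcing_set e l B.
  by split; [exact: spec_leaky_of_leaky | exact: leaky_of_spec_leaky].
split=> //; apply: eq_bigl => B.
by apply/idP/idP => /same_sets.
Qed.
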